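(* Let $b>1$ be an integer and let $H$ be a generalized $b$-happy function with digit mean $\mu$ and digit standard deviation $\sigma$. There exists $N$ such that for every $n>N$ and every $n$-strict interval $I$ there exists $m\in\mathbb{N}$ with $$\left[\mu m-\sigma m^{5/8},\ \mu m+\sigma m^{5/8}\right]\subseteq I.$$
   Context: A generalized $b$-happy function: fix an integer $b>1$ and non-negative integers $h(0),\dots,h(b-1)$ with $h(0)=0$, $h(1)=1$; for $n=\sum_{i=0}^k a_ib^i$ in base $b$, $H(n)=\sum_{i=0}^k h(a_i)$. Digit mean $\mu=\frac1b\sum_{j=0}^{b-1}h(j)$, digit variance $\sigma^2=\frac1b\sum_{j=0}^{b-1}(h(j)-\mu)^2$. An integer interval $[a,c]$ ($a,c$ real) is the set of integers $x$ with $a\le x\le c$; $|I|$ is its cardinality. For a positive integer $n$, an integer interval $I$ is $n$-strict if $I\subseteq[b^{n-1},b^n-1]$ and $|I|=b^{3n/4}$. *)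

From Stdlib Require Import Reals List ZArith Lia Lra.
Open Scope R_scope.

Fixpoint digit_sum (h : nat -> nat) (b : nat) : R :=
  match b with
  | O => 0
  | S k => digit_sum h k + INR (h k)
  end.

Definition digit_mean (h : nat -> nat) (b : nat) : R := digit_sum h b / INR b.

Fixpoint digit_sqdev_sum (h : nat -> nat) (b : nat) (mu : R) : R :=
  match b with
  | O => 0
  | S k => digit_sqdev_sum h k mu + (INR (h k) - mu) ^ 2
  end.

Definition digit_var (h : nat -> nat) (b : nat) : R :=
  digit_sqdev_sum h b (digit_mean h b) / INR b.

Definition digit_sd (h : nat -> nat) (b : nat) : R := sqrt (digit_var h b).

(* Base-b digit list (least significant first) and the generalized happy
   function H(n) = sum_i h(a_i).  (Not needed for the statement itself,
   recorded for context.) *)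
Fixpoint digits_aux (b fuel n : nat) : list nat :=
  match fuel with
  | O => nil
  | S f => if Nat.eqb n 0 then nil else (n mod b) :: digits_aux b f (n / b)
  end.
Definition happyH (h : nat -> nat) (b n : nat) : nat :=
  fold_right (fun d acc => h d + acc)%nat 0%nat (digits_aux b n n).

Definition int_interval (a c : R) (x : Z) : Prop := a <= IZR x <= c.

Definition has_card (S : Z -> Prop) (k : nat) : Prop :=
  exists l : list Z, NoDup l /\ (forall x, In x l <-> S x) /\ length l = k.

Definition n_strict (b n : nat) (a c : R) : Prop :=
  (forall x, int_interval a c x ->
     int_interval (INR b ^ (n - 1)) (INR b ^ n - 1) x) /\
  exists k : nat, has_card (int_interval a c) k /\
                  INR k = Rpower (INR b) (3 * INR n / 4).

From Stdlib Require Import Reals List ZArith.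
From Stdlib Require Import Lia Lra.
Open Scope R_scope.

(* Write [s = b^(n/8)], so that [|I| = s^6] and [I] lies below [b^n = s^8].
   Let [m] be the largest integer with [mu m] at most the centre of [I].  Then
   [mu m] is within [mu] of the centre and [sigma m^(5/8) = O(s^5)], so for
   [n] large the window of radius [sigma m^(5/8)] around [mu m] fits in the
   half-width [(s^6 - 1)/2] of [I]. *)

Lemma list_Z_has_min (l : list Z) : l <> nil ->
  exists z, In z l /\ forall x, In x l -> (z <= x)%Z.
Proof.
  induction l as [|a l IH]; [congruence|intros _].
  destruct l as [|a' l'].
  - exists a; split; [left; auto|]. intros x [->|[]]; lia.
  - destruct IH as [z [Hz Hmin]]; [discriminate|].
    exists (Z.min a z); split.
    + destruct (Z.min_spec a z) as [[_ ->]|[_ ->]]; [left|right]; auto.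
    + intros x [->|Hx]; [lia|]. specialize (Hmin x Hx); lia.
Qed.

Lemma list_Z_has_max (l : list Z) : l <> nil ->
  exists z, In z l /\ forall x, In x l -> (x <= z)%Z.
Proof.
  intros Hl.
  destruct (list_Z_has_min (map Z.opp l)) as [z [Hz Hmin]].
  { destruct l; [congruence|discriminate]. }
  exists (- z)%Z; split.
  - apply in_map_iff in Hz as [y [<- Hy]]. rewrite Z.opp_involutive; exact Hy.
  - intros x Hx. specialize (Hmin (- x)%Z (in_map Z.opp l x Hx)). lia.
Qed.

Lemma NoDup_length_le_range (l : list Z) (lo hi : Z) : NoDup l ->
  (forall x, In x l -> (lo <= x <= hi)%Z) ->
  (Z.of_nat (length l) <= Z.max 0 (hi - lo + 1))%Z.
Proof.
  intros Hnd Hrange.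
  assert (Hincl : incl l (map (fun i => (lo + Z.of_nat i)%Z)
                              (seq 0 (Z.to_nat (hi - lo + 1))))).
  { intros x Hx. apply in_map_iff. exists (Z.to_nat (x - lo)).
    specialize (Hrange x Hx). split; [lia|]. apply in_seq. lia. }
  pose proof (NoDup_incl_length Hnd Hincl) as Hlen.
  rewrite length_map, length_seq in Hlen. lia.
Qed.

Lemma has_card_spread (S : Z -> Prop) (k : nat) : has_card S k -> (0 < k)%nat ->
  exists u v : Z, S u /\ S v /\ INR k - 1 <= IZR v - IZR u.
Proof.
  intros [l [Hnd [Hin Hlen]]] Hk.
  assert (Hl : l <> nil) by (intros ->; simpl in Hlen; lia).
  destruct (list_Z_has_min l Hl) as [u [Hu Hmin]].
  destruct (list_Z_has_max l Hl) as [v [Hv Hmax]].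
  exists u, v; split; [apply Hin; exact Hu|]; split; [apply Hin; exact Hv|].
  pose proof (NoDup_length_le_range l u v Hnd
                (fun x Hx => conj (Hmin x Hx) (Hmax x Hx))) as Hcount.
  rewrite Hlen in Hcount.
  rewrite INR_IZR_INZ, <- !minus_IZR. apply IZR_le. lia.
Qed.

Lemma digit_sum_ge_term (h : nat -> nat) (j k : nat) :
  (j < k)%nat -> INR (h j) <= digit_sum h k.
Proof.
  induction k as [|k IH]; intros Hjk; [lia|]. simpl.
  assert (Hsum : 0 <= digit_sum h k).
  { clear. induction k; simpl; [lra|]. pose proof (pos_INR (h k)); lra. }
  pose proof (pos_INR (h k)).
  destruct (Nat.eq_dec j k) as [->|Hne]; [lra|].
  specialize (IH ltac:(lia)); lra.
Qed.

Lemma digit_mean_pos (h : nat -> nat) (b j : nat) :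
  (j < b)%nat -> (0 < h j)%nat -> 0 < digit_mean h b.
Proof.
  intros Hjb Hj. unfold digit_mean.
  pose proof (digit_sum_ge_term h j b Hjb).
  apply lt_0_INR in Hj.
  apply Rdiv_lt_0_compat; [lra|apply lt_0_INR; lia].
Qed.

Lemma floor_multiple (mu t : R) : 0 < mu -> 0 <= t ->
  exists m : nat, t - mu < mu * INR m <= t.
Proof.
  intros Hmu Ht.
  destruct (base_Int_part (t / mu)) as [Hle Hgt].
  assert (Hq : 0 <= t / mu) by (unfold Rdiv; apply Rmult_le_pos, Rlt_le, Rinv_0_lt_compat; lra).
  assert (Hz : (0 <= Int_part (t / mu))%Z).
  { assert (Hlt : IZR (-1) < IZR (Int_part (t / mu))) by (simpl; lra).
    apply lt_IZR in Hlt; lia. }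
  exists (Z.to_nat (Int_part (t / mu))).
  rewrite INR_IZR_INZ, Z2Nat.id by exact Hz.
  assert (Ht' : t = mu * (t / mu)) by (field; lra).
  set (q := t / mu) in *. rewrite Ht'. split; nra.
Qed.

Lemma Rpower_pow_base (x p : R) (j : nat) : 0 < x ->
  Rpower (x ^ j) p = Rpower x (INR j * p).
Proof. intros Hx. rewrite <- Rpower_pow by exact Hx. apply Rpower_mult. Qed.

Lemma pow_Rpower (x y : R) (j : nat) : 0 < x ->
  Rpower x y ^ j = Rpower x (y * INR j).
Proof.
  intros Hx. rewrite <- Rpower_pow by (unfold Rpower; apply exp_pos).
  apply Rpower_mult.
Qed.

Lemma Rpower_eventually_ge (x e C : R) : 1 < x -> 0 < e ->
  exists N : nat, forall n : nat, (N < n)%nat -> C <= Rpower x (INR n * e).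
Proof.
  intros Hx He.
  assert (Hln : 0 < ln x) by (rewrite <- ln_1; apply ln_increasing; lra).
  assert (Hrate : 0 < e * ln x) by (apply Rmult_lt_0_compat; lra).
  destruct (INR_archimed (e * ln x) C Hrate) as [N HN].
  exists N. intros n Hn.
  assert (HNn : INR N * (e * ln x) <= INR n * (e * ln x))
    by (apply Rmult_le_compat_r; [lra|apply le_INR; lia]).
  assert (HC : C <= INR n * e * ln x) by (rewrite Rmult_assoc; lra).
  unfold Rpower. pose proof (exp_ineq1_le (INR n * e * ln x)). lra.
Qed.

Lemma n_strict_endpoints (b n : nat) (a c : R) : (1 < b)%nat -> n_strict b n a c ->
  let s := Rpower (INR b) (INR n * / 8) in
  exists u v : Z, a <= IZR u /\ IZR v <= c /\ 1 <= IZR u /\ IZR v <= s ^ 8 /\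
    s ^ 6 - 1 <= IZR v - IZR u.
Proof.
  intros Hb [Hsub [k [Hcard Hk]]] s.
  assert (HB : 0 < INR b) by (apply lt_0_INR; lia).
  assert (Hk0 : (0 < k)%nat).
  { apply INR_lt. rewrite Hk. unfold Rpower. apply exp_pos. }
  destruct (has_card_spread _ _ Hcard Hk0) as [u [v [Hu [Hv Hspread]]]].
  pose proof (Hsub u Hu) as [Hu1 _]. pose proof (Hsub v Hv) as [_ Hv1].
  assert (Hpow : 1 <= INR b ^ (n - 1)) by (apply pow_R1_Rle, (le_INR 1); lia).
  assert (Hs6 : s ^ 6 = INR k)
    by (unfold s; rewrite Hk, pow_Rpower by exact HB; f_equal; simpl; lra).
  assert (Hs8 : s ^ 8 = INR b ^ n)
    by (unfold s; rewrite pow_Rpower, <- Rpower_pow by exact HB; f_equal; simpl; lra).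
  exists u, v. destruct Hu, Hv. rewrite Hs6, Hs8. repeat split; lra.
Qed.

Lemma Rpower_pow_div (x y p : R) (j k : nat) : 0 < x -> 0 < y -> INR j * p = INR k ->
  Rpower (x ^ j / y) p = x ^ k * Rpower (/ y) p.
Proof.
  intros Hx Hy Hjk. unfold Rdiv.
  rewrite <- Rpower_mult_distr, Rpower_pow_base, Hjk, Rpower_pow
    by (try apply pow_lt; try apply Rinv_0_lt_compat; assumption).
  reflexivity.
Qed.

(* [Rpower 0 p = exp (p * ln 0) = 1], since [ln 0 = 0] in Stdlib; hence the [1 +]. *)
Lemma Rpower_INR_le (m : nat) (p mu T : R) : 0 <= p -> 0 < mu -> 0 < T ->
  mu * INR m <= T -> Rpower (INR m) p <= 1 + Rpower (T / mu) p.
Proof.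
  intros Hp Hmu HT HmT.
  assert (Hpos : 0 < Rpower (T / mu) p) by (unfold Rpower; apply exp_pos).
  destruct m as [|m].
  - replace (Rpower (INR 0) p) with 1; [lra|].
    unfold Rpower, ln. simpl.
    destruct (Rlt_dec 0 0) as [Habs|_]; [destruct (Rlt_irrefl _ Habs)|]. rewrite Rmult_0_r, exp_0. reflexivity.
  - assert (Hm : 0 < INR (S m)) by (apply lt_0_INR; lia).
    enough (Rpower (INR (S m)) p <= Rpower (T / mu) p) by lra.
    apply Rle_Rpower_l; [exact Hp|split; [exact Hm|]].
    apply Rmult_le_reg_l with mu; [exact Hmu|].
    replace (mu * (T / mu)) with T by (field; lra). exact HmT.
Qed.

Lemma affine_quintic_le_half_sextic (a c s : R) : 0 <= a -> 0 <= c ->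
  2 * a + 2 * c + 1 <= s -> a + c * s ^ 5 <= (s ^ 6 - 1) / 2.
Proof.
  intros Ha Hc Hs.
  assert (Hs5 : 1 <= s ^ 5) by (apply pow_R1_Rle; lra).
  assert (Hprod : (2 * a + 2 * c + 1) * s ^ 5 <= s * s ^ 5)
    by (apply Rmult_le_compat_r; lra).
  replace (s ^ 6) with (s * s ^ 5) by ring. nra.
Qed.

Theorem lemma4p2 (b : nat) (h : nat -> nat) :
  (1 < b)%nat -> h 0%nat = 0%nat -> h 1%nat = 1%nat ->
  exists N : nat, forall n : nat, (N < n)%nat ->
    forall a c : R, n_strict b n a c ->
      exists m : nat,
        forall x : Z,
          int_interval (digit_mean h b * INR m - digit_sd h b * Rpower (INR m) (5 / 8))
                       (digit_mean h b * INR m + digit_sd h b * Rpower (INR m) (5 / 8)) x ->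
          int_interval a c x.
Proof.
  intros Hb _ H1.
  set (mu := digit_mean h b); set (sg := digit_sd h b).
  assert (Hmu : 0 < mu) by (apply (digit_mean_pos h b 1); lia).
  assert (Hsg : 0 <= sg) by apply sqrt_pos.
  assert (HB : 1 < INR b) by (apply (lt_INR 1); exact Hb).
  set (D := Rpower (/ mu) (5 / 8)).
  assert (HD : 0 < D) by (unfold D, Rpower; apply exp_pos).
  destruct (Rpower_eventually_ge (INR b) (/ 8) (2 * (sg + mu) + 2 * (sg * D) + 1) HB)
    as [N HN]; [lra|].
  exists N. intros n Hn a c Hstrict.
  destruct (n_strict_endpoints b n a c Hb Hstrict)
    as [u [v [Hau [Hvc [Hu1 [HvT Hspread]]]]]].
  set (s := Rpower (INR b) (INR n * / 8)) in *.
  pose proof (HN n Hn) as Hlarge. fold s in Hlarge.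
  assert (HsgD : 0 <= sg * D) by (apply Rmult_le_pos; lra).
  assert (Hs6 : 1 <= s ^ 6) by (apply pow_R1_Rle; lra).
  destruct (floor_multiple mu ((IZR u + IZR v) / 2)) as [m Hm]; [exact Hmu|lra|].
  exists m.
  assert (HX : Rpower (INR m) (5 / 8) <= 1 + s ^ 5 * D).
  { unfold D; rewrite <- (Rpower_pow_div s mu (5 / 8) 8 5) by (simpl; lra).
    apply Rpower_INR_le; [lra|lra|apply pow_lt; lra|lra]. }
  assert (HsgX : sg * Rpower (INR m) (5 / 8) <= sg + sg * D * s ^ 5).
  { replace (sg + sg * D * s ^ 5) with (sg * (1 + s ^ 5 * D)) by ring.
    apply Rmult_le_compat_l; assumption. }
  pose proof (affine_quintic_le_half_sextic (sg + mu) (sg * D) s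
                ltac:(lra) HsgD Hlarge).
  intros x [Hx1 Hx2]. fold mu sg in Hx1, Hx2. split; lra.
Qed.
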